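(* Let $I$ be a finite index set of users. For each $i \in I$ let $p_i \in [0,1]$, $\Delta p_i \in \mathbb{R}$ with $p_i - \Delta p_i \in [0,1]$, and $a_i \in [0,1]$. Let $\mathrm{CPA} > 0$ and $\beta > 0$, and define $$J = \{ i \in I : \mathrm{CPA}\, p_i a_i > \beta \Delta p_i \}, \qquad K = \{ i \in I : \mathrm{CPA}\, p_i a_i < \beta \Delta p_i \}.$$ Assume it is not the case that $\mathrm{CPA}\, p_i a_i = \beta \Delta p_i$ for all $i \in I$. Suppose that $\sum_{j \in J} p_j a_j = \sum_{k \in K} p_k a_k$ and that this common value is positive. Define $$\mathscr{A}_1 = \frac{\sum_{j\in J} p_j + \sum_{k \in K} (p_k - \Delta p_k)}{\sum_{j \in J} p_j a_j}, \qquad \mathscr{A}_2 = \frac{\sum_{j\in J} (p_j - \Delta p_j) + \sum_{k \in K} p_k}{\sum_{k \in K} p_k a_k}.$$ Then $\mathscr{A}_1 < \mathscr{A}_2$.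
   Context: Interpretation (real-time bidding for online ads): each $i\in I$ indexes an ad request from a distinct user $u_i$; $p_i$ is the action rate if the advertiser's ad is shown, $p_i-\Delta p_i$ the background action rate if it is not shown, $\Delta p_i$ the AR lift, and $a_i$ the probability that an action from $u_i$ is attributed to the DSP that wins $u_i$. $\mathrm{CPA}$ is the advertiser's cost per action. In pure second-price auctions with no other candidates, $DSP_1$ bids the ''rational'' price $\mathrm{CPA}\, p_i a_i$ and $DSP_2$ bids $\beta \Delta p_i$ (lift-based bidding); $DSP_1$ wins the users in $J$ and $DSP_2$ those in $K$. The expected attributed actions are $\sum_J p_j a_j$ and $\sum_K p_k a_k$ (assumed equal). $\mathscr{A}_1$ (resp. $\mathscr{A}_2$) is the expected total number of actions per attributed action if only $DSP_1$ (resp. $DSP_2$) is considered. The excluded case is $a_i = \frac{\beta}{\mathrm{CPA}}\cdot\frac{\Delta p_i}{p_i}$ for all $i$, i.e. both DSPs always bid the same price. *)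

From mathcomp Require Import all_boot all_order all_algebra.
Set Implicit Arguments. Unset Strict Implicit. Unset Printing Implicit Defensive.
Import Order.TTheory GRing.Theory Num.Theory.
Local Open Scope ring_scope.

(* Users won by DSP_1 (rational bidding strictly higher) *)
Definition setJ (R : realFieldType) (I : finType) (CPA beta : R) (p dp a : I -> R)
  : {set I} := [set i | beta * dp i < CPA * p i * a i].
(* Users won by DSP_2 (lift-based bidding strictly higher) *)
Definition setK (R : realFieldType) (I : finType) (CPA beta : R) (p dp a : I -> R)
  : {set I} := [set i | CPA * p i * a i < beta * dp i].

From mathcomp Require Import all_boot all_order all_algebra.
From mathcomp Require Import lra.
Import Order.TTheory GRing.Theory Num.Theory.
Local Open Scope ring_scope.

(* Since both sums of attributed actions equal the same S > 0, A1 and A2 have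
   the same denominator and their numerators differ by
   sum_K dp - sum_J dp.  Summing the bid comparisons over J and over K gives
   beta * sum_J dp < CPA * S <= beta * sum_K dp, the first inequality being
   strict because S > 0 forces J to be nonempty. *)

Section BidComparison.

Variables (R : realFieldType) (I : finType) (p dp a : I -> R) (CPA beta : R).

Let J := setJ CPA beta p dp a.
Let K := setK CPA beta p dp a.

Lemma setJ_lift_sum_lt : J != set0 ->
  beta * \sum_(j in J) dp j < CPA * \sum_(j in J) p j * a j.
Proof.
case/set0Pn=> x xJ; rewrite !mulr_sumr; apply: ltr_sum.
  by apply/hasP; exists x; rewrite ?mem_index_enum.
by move=> i; rewrite inE mulrA.
Qed.

Lemma setK_lift_sum_ge :
  CPA * \sum_(k in K) p k * a k <= beta * \sum_(k in K) dp k.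
Proof.
rewrite !mulr_sumr; apply: ler_sum => i.
by rewrite inE mulrA => /ltW.
Qed.

Lemma setJ_sum_lift_lt_setK : 0 < beta -> J != set0 ->
  \sum_(j in J) p j * a j = \sum_(k in K) p k * a k ->
  \sum_(j in J) dp j < \sum_(k in K) dp k.
Proof.
move=> hbeta J0 eqS; rewrite -(ltr_pM2l hbeta).
by apply: lt_le_trans (setJ_lift_sum_lt J0) _; rewrite eqS setK_lift_sum_ge.
Qed.

End BidComparison.

Arguments setJ_sum_lift_lt_setK {R I p dp a CPA beta}.

Theorem theorem3 (R : realFieldType) (I : finType) (p dp a : I -> R) (CPA beta : R)
  (hp : forall i, 0 <= p i <= 1)
  (hpd : forall i, 0 <= p i - dp i <= 1)
  (ha : forall i, 0 <= a i <= 1)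
  (hCPA : 0 < CPA) (hbeta : 0 < beta)
  (hnot : ~ (forall i, CPA * p i * a i = beta * dp i))
  (heq : \sum_(j in setJ CPA beta p dp a) p j * a j
         = \sum_(k in setK CPA beta p dp a) p k * a k)
  (hpos : 0 < \sum_(j in setJ CPA beta p dp a) p j * a j) :
  let J := setJ CPA beta p dp a in
  let K := setK CPA beta p dp a in
  (\sum_(j in J) p j + \sum_(k in K) (p k - dp k)) / (\sum_(j in J) p j * a j)
  < (\sum_(j in J) (p j - dp j) + \sum_(k in K) p k) / (\sum_(k in K) p k * a k).
Proof.
rewrite /=; set J := setJ _ _ _ _ _ in heq hpos *; set K := setK _ _ _ _ _ in heq *.
have J0 : J != set0.
  by apply: contraTneq hpos => ->; rewrite big_set0 ltxx.
have := setJ_sum_lift_lt_setK hbeta J0 heq.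
rewrite -heq ltr_pM2r ?invr_gt0 // !sumrB.
lra.
Qed.
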